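(* Consider the algorithm AOD described in the context, with known horizon $T$, under assumption (A3). For any interval $J=[i,j]\in\mathcal{D}$ and every $t\in J$ with $t\le T$, \[ \sum_{u=i}^t f_u(\mathbf{w}_u)-\sum_{u=i}^t f_u(\mathbf{w}_{u,J})\le\sqrt{3(t-i+1)c(t)}, \] where $c(t)=1+\ln t+\ln(1+\log_2 T)+\ln\frac{5+3\ln(1+t)}{2}$.
   Context: Online convex optimization: $\Omega\subseteq\mathbb{R}^d$ convex; in round $t=1,\ldots,T$ the learner plays $\mathbf{w}_t\in\Omega$ and then a convex $f_t:\Omega\to\mathbb{R}$ is revealed. Assumption (A3): $0\le f_t(\mathbf{w})\le1$ for all $\mathbf{w}\in\Omega$, $t\in[T]$. (Gradients $\nabla f_t$ are assumed to exist; $D,G>0$ are constants; $\Pi_\Omega$ is Euclidean projection.) Dense geometric covering intervals: $\mathcal{D}=\bigcup_{k\ge0,\,2^k\le T}\mathcal{D}_k$, $\mathcal{D}_k=\{[(i-1)2^k+1,\,i2^k]: i=1,2,\ldots\}$. Algorithm AOD: for each $I\in\mathcal{D}$ an expert $E_I$ runs online gradient descent $\mathbf{w}_{t+1,I}=\Pi_\Omega[\mathbf{w}_{t,I}-\eta_I\nabla f_t(\mathbf{w}_{t,I})]$, $\eta_I=D/(G\sqrt{|I|})$, over rounds $t\in I$; its initial point is arbitrary if $\min I=1$, and otherwise is the next iterate of the expert of the preceding same-length interval $[\min I-|I|,\min I-1]$ after processing $f_{\min I-1}$. Active experts at round $t$: $\mathcal{A}_t=\{E_I:I\in\mathcal{D},t\in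 I\}$. Meta-algorithm (AdaNormalHedge): $\Phi(R,C)=\exp([R]_+^2/(3C))$, $[x]_+=\max(0,x)$, $\Phi(0,0)=1$, $w(R,C)=\tfrac12(\Phi(R+1,C+1)-\Phi(R-1,C+1))$, $R_{t-1,I}=\sum_{u=\min I}^{t-1}(f_u(\mathbf{w}_u)-f_u(\mathbf{w}_{u,I}))$, $C_{t-1,I}=\sum_{u=\min I}^{t-1}|f_u(\mathbf{w}_u)-f_u(\mathbf{w}_{u,I})|$, $p_{t,I}=w(R_{t-1,I},C_{t-1,I})/\sum_{E_{I'}\in\mathcal{A}_t}w(R_{t-1,I'},C_{t-1,I'})$, played point $\mathbf{w}_t=\sum_{E_I\in\mathcal{A}_t}p_{t,I}\mathbf{w}_{t,I}$. *)

From HB Require Import structures.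
From mathcomp Require Import all_boot all_order all_algebra.
From mathcomp Require Import reals.
From mathcomp Require Import sequences exp.
Set Implicit Arguments. Unset Strict Implicit. Unset Printing Implicit Defensive.
Import Order.TTheory GRing.Theory Num.Theory.
Local Open Scope ring_scope.

Section AOD.
Variable R : realType.
Variable d : nat.
Notation vec := 'rV[R]_d.

Definition dotv (u v : vec) : R := \sum_(j < d) u 0 j * v 0 j.
Definition sqnorm (u : vec) : R := dotv u u.

(* Dense geometric covering intervals.  The interval
   [(i-1) 2^k + 1, i 2^k] is encoded by the pair (k, i). *)
Definition inD (T k i : nat) : bool := (2 ^ k <= T)%N && (0 < i)%N.
Definition lo (k i : nat) : nat := ((i - 1) * 2 ^ k).+1.
Definition hi (k i : nat) : nat := (i * 2 ^ k)%N.
Definition inI (k i t : nat) : bool := (lo k i <= t <= hi k i)%N.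
Definition idx (k t : nat) : nat := ((t - 1) %/ 2 ^ k).+1.

Definition eta (D G : R) (k : nat) : R := D / (G * Num.sqrt ((2 ^ k)%N%:R)).

(* AdaNormalHedge potential and weight. With C = 0 the formula gives
   exp(0) = 1 (since x/0 = 0 in MathComp), matching Phi(0,0) = 1. *)
Definition Phi (r c : R) : R := expR (Num.max r 0 ^+ 2 / (3 * c)).
Definition wgt (r c : R) : R := (Phi (r + 1) (c + 1) - Phi (r - 1) (c + 1)) / 2.

Variables (f : nat -> vec -> R) (w : nat -> vec) (wI : nat -> nat -> nat -> vec).

(* R_{t-1,I} and C_{t-1,I} for I = (k,i) *)
Definition Rg (k i t : nat) : R :=
  \sum_(lo k i <= u < t) (f u (w u) - f u (wI k i u)).
Definition Cg (k i t : nat) : R :=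
  \sum_(lo k i <= u < t) `|f u (w u) - f u (wI k i u)|.

Definition uw (k t : nat) : R := wgt (Rg k (idx k t) t) (Cg k (idx k t) t).

(* The active experts at round t <= T are exactly one per level k with
   2^k <= T, namely (k, idx k t). *)
Definition wsum (T t : nat) : R := \sum_(0 <= k < T.+1 | (2 ^ k <= T)%N) uw k t.
Definition meta_point (T t : nat) : vec :=
  \sum_(0 <= k < T.+1 | (2 ^ k <= T)%N) (uw k t / wsum T t) *: wI k (idx k t) t.

End AOD.

Definition OCO_A3 (R : realType) (d T : nat) (Omega : 'rV[R]_d -> Prop)
  (f : nat -> 'rV[R]_d -> R) (grad : nat -> 'rV[R]_d -> 'rV[R]_d)
  (proj : 'rV[R]_d -> 'rV[R]_d) : Prop :=
  (forall x y (l : R), Omega x -> Omega y -> 0 <= l <= 1 ->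
     Omega (l *: x + (1 - l) *: y)) /\
  (forall x, Omega (proj x)) /\
  (forall x y, Omega y -> sqnorm (x - proj x) <= sqnorm (x - y)) /\
  (forall t, (1 <= t <= T)%N ->
     (forall x y (l : R), Omega x -> Omega y -> 0 <= l <= 1 ->
        f t (l *: x + (1 - l) *: y) <= l * f t x + (1 - l) * f t y) /\
     (forall x y, Omega x -> Omega y -> f t x + dotv (grad t x) (y - x) <= f t y) /\
     (forall x, Omega x -> 0 <= f t x <= 1)).

(* The run of AOD for horizon T: expert iterates wI k i t (for t in the
   interval (k,i)) and played points w t. *)
Definition AOD_run (R : realType) (d T : nat) (D G : R) (Omega : 'rV[R]_d -> Prop)
  (f : nat -> 'rV[R]_d -> R) (grad : nat -> 'rV[R]_d -> 'rV[R]_d)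
  (proj : 'rV[R]_d -> 'rV[R]_d)
  (wI : nat -> nat -> nat -> 'rV[R]_d) (w : nat -> 'rV[R]_d) : Prop :=
  (forall k, (2 ^ k <= T)%N -> Omega (wI k 1%N 1%N)) /\
  (* initial point of an expert with min I > 1: next iterate of the expert of
     the preceding same-length interval after processing f_{min I - 1} *)
  (forall k i, inD T k i -> (1 < i)%N -> (lo k i <= T)%N ->
     wI k i (lo k i) =
       proj (wI k i.-1 (lo k i).-1
             - eta D G k *: grad (lo k i).-1 (wI k i.-1 (lo k i).-1))) /\
  (forall k i t, inD T k i -> inI k i t -> inI k i t.+1 -> (t.+1 <= T)%N ->
     wI k i t.+1 = proj (wI k i t - eta D G k *: grad t (wI k i t))) /\
  (forall t, (1 <= t <= T)%N -> w t = meta_point f w wI T t).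

From HB Require Import structures.
From mathcomp Require Import all_boot all_order all_algebra.
From mathcomp Require Import reals interval_inference convex.
From mathcomp Require Import sequences exp.
From mathcomp Require Import ring lra zify.
Set Implicit Arguments. Unset Strict Implicit. Unset Printing Implicit Defensive.
Import Order.TTheory GRing.Theory Num.Theory.
Local Open Scope ring_scope.

(* Give every expert E_I the potential
     Phi(R_I, C_I) - 1 - e^(17/15) ln (1 + C_I),
   with R_I, C_I its (signed and absolute) regret so far, and let Psi be their sum over
   all intervals.  A round moves only the active expert of each level, and for it
     Phi(R + x, C + |x|) <= Phi(R, C) + w(R, C) x + e^(17/15) |x| / (2 (C + 1)),
   while the weighted instantaneous regrets sum to at most 0 by Jensen, the played point
   being the w-average of the experts' points.  Hence Psi never increases from Psi = 0,
   so Phi(R_J, C_J) <= 1 + e^(17/15) (1 + log2 T) t ln (1 + t) <= e^(c(t)), and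
   C_J <= t - i + 1 turns this into the claimed bound on R_J. *)

Section ExpBounds.
Variable R : realType.
Implicit Types x z q : R.

Lemma expR_convex (l x y : R) : 0 <= l <= 1 ->
  expR (l * x + (1 - l) * y) <= l * expR x + (1 - l) * expR y.
Proof.
by case/andP=> l0 l1; have := convex_expR (Itv01 l0 l1) x y; rewrite /conv.
Qed.

Lemma expR_le_inv1B z : z < 1 -> expR z <= (1 - z)^-1.
Proof.
move=> z1; have := expR_ge1Dx (- z); rewrite expRN => hz.
by rewrite -[expR z]invrK lef_pV2 ?posrE ?invr_gt0 ?expR_gt0 //; lra.
Qed.

Lemma expR_sub1_le z : 0 <= z <= 1/3 -> expR z - 1 <= 3/2 * z.
Proof.
case/andP=> z0 z3; have z1 : 0 < 1 - z by lra.
have hz : expR z <= (1 - z)^-1 by apply: expR_le_inv1B; lra.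
apply: le_trans (lerB hz (lexx 1)) _; rewrite -subr_ge0.
have -> : 3 / 2 * z - ((1 - z)^-1 - 1) = z * (1 - 3 * z) / 2 / (1 - z).
  by field; lra.
by apply: divr_ge0; [apply: divr_ge0; nra | lra].
Qed.

Lemma quartic_le (p : R) : 5/6 <= p <= 1 -> 1 - p ^+ 4 <= 9/2 * (1 - p) * p ^+ 2.
Proof.
case/andP=> p5 p1.
have h : 0 <= (p - 5/6) ^+ 2 * (1 - (p - 5/6)) by apply: mulr_ge0; [exact: sqr_ge0 | lra].
rewrite -subr_ge0.
have -> : 9/2 * (1 - p) * p ^+ 2 - (1 - p ^+ 4) =
    (1 - p) * ((p - 5/6) ^+ 2 * (1 - (p - 5/6)) + 11/4 * (p - 5/6) + 1/54) by field.
by apply: mulr_ge0; lra.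
Qed.

Lemma expR_sub_expRN_le x : 0 <= x <= 1/3 -> expR x - expR (- x) <= 9/4 * x.
Proof.
case/andP=> x0 x3; set p := 1 - x / 2.
have p0 : 0 < p by rewrite /p; lra.
have ea : expR x = expR (x / 2) ^+ 2 by rewrite -expRM_natl; congr expR; field.
have eb : expR (- x) = expR (- (x / 2)) ^+ 2 by rewrite -expRM_natl; congr expR; field.
have ha : expR (x / 2) <= p^-1 by apply: expR_le_inv1B; lra.
have hb : p <= expR (- (x / 2)) by have := expR_ge1Dx (- (x / 2)); rewrite /p; lra.
have hp : (1 - p ^+ 4) / p ^+ 2 <= 9/2 * (1 - p).
  by rewrite ler_pdivrMr ?exprn_gt0 //; apply: quartic_le; rewrite /p; lra.
have -> : 9/4 * x = 9/2 * (1 - p) by rewrite /p; field.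
apply: le_trans hp; rewrite ea eb.
have -> : (1 - p ^+ 4) / p ^+ 2 = p^-1 ^+ 2 - p ^+ 2 by field; lra.
have pV0 : 0 < p^-1 by rewrite invr_gt0.
by apply: lerB; rewrite ler_pXn2r ?nnegrE ?expR_ge0 //; lra.
Qed.

Lemma expR_add_expRN_le q : 0 <= q <= 2/3 -> expR q + expR (- q) <= 2 + 81/64 * q ^+ 2.
Proof.
case/andP=> q0 q2.
have h1 : expR (q / 2) - expR (- (q / 2)) <= 9/8 * q.
  by have := @expR_sub_expRN_le (q / 2) ltac:(lra); lra.
have h0 : 0 <= expR (q / 2) - expR (- (q / 2)) by rewrite subr_ge0 ler_expR; lra.
have -> : expR q + expR (- q) = (expR (q / 2) - expR (- (q / 2))) ^+ 2 + 2.
  have eq2 : expR q = expR (q / 2) ^+ 2 by rewrite -expRM_natl; congr expR; field.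
  have eNq2 : expR (- q) = expR (- (q / 2)) ^+ 2 by rewrite -expRM_natl; congr expR; field.
  have e1 : expR (q / 2) * expR (- (q / 2)) = 1 by rewrite -expRD subrr expR0.
  by rewrite eq2 eNq2 sqrrB mulr2n e1; ring.
have : (expR (q / 2) - expR (- (q / 2))) ^+ 2 <= (9/8 * q) ^+ 2 by nra.
lra.
Qed.

Lemma expR_midpoint_le m q : 0 <= q <= 2/3 ->
  (expR (m + q) + expR (m - q)) / 2 <= expR (m + 81/128 * q ^+ 2).
Proof.
move=> hq; have hc := expR_add_expRN_le hq.
have h : expR m * (1 + 81/128 * q ^+ 2) <= expR m * expR (81/128 * q ^+ 2).
  by apply: ler_wpM2l; [exact: expR_ge0 | exact: expR_ge1Dx].
have h2 := ler_wpM2l (expR_ge0 m) hc.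
by rewrite !expRD; lra.
Qed.

End ExpBounds.

Section AdaNormalHedgePotential.
Variable R : realType.
Implicit Types r c x : R.

Lemma Phi_ge1 r c : 0 <= c -> 1 <= Phi r c.
Proof.
move=> c0; rewrite /Phi -[X in X <= _]expR0 ler_expR.
by apply: divr_ge0; [exact: sqr_ge0 | lra].
Qed.

Lemma Phi_le0 r c : r <= 0 -> Phi r c = 1.
Proof. by move=> r0; rewrite /Phi max_r // expr0n mul0r expR0. Qed.

Lemma Phi_ge0 r c : 0 <= r -> Phi r c = expR (r ^+ 2 / (3 * c)).
Proof. by move=> r0; rewrite /Phi max_l. Qed.

Lemma Phi_le_expR r c : 0 <= c -> Phi r c <= expR (r ^+ 2 / (3 * c)).
Proof.
move=> c0; rewrite /Phi ler_expR; apply: ler_wpM2r; first by rewrite invr_ge0; lra.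
by case: (leP r 0) => _; rewrite ?expr0n ?sqr_ge0.
Qed.

Lemma Phi_homo r r' c : 0 <= c -> r <= r' -> Phi r c <= Phi r' c.
Proof.
move=> c0 rr'; rewrite /Phi ler_expR; apply: ler_wpM2r; first by rewrite invr_ge0; lra.
have hm : Num.max r 0 <= Num.max r' 0 by rewrite ge_max !le_max rr' lexx !orbT.
by rewrite ler_pXn2r ?hm // nnegrE le_max lexx orbT.
Qed.

Lemma wgt_ge0 r c : 0 <= c -> 0 <= wgt r c.
Proof. by move=> c0; rewrite /wgt divr_ge0 // subr_ge0 Phi_homo //; lra. Qed.

Lemma wgt00_gt0 : 0 < wgt 0 0 :> R.
Proof.
by rewrite /wgt !add0r Phi_ge0 // Phi_le0.
Qed.

(* [17/15] is [max_{0 <= A <= 32/15} 17/32 * A]: beyond [A = 32/15] the drift is negative. *)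
Lemma expR_drift_le (A e : R) : 0 <= A -> 0 <= e <= 1/3 ->
  expR (A + e * (1 - 15/32 * A)) <= expR A + 3/2 * e * expR (17/15).
Proof.
move=> A0 /andP[e0 e3].
have eK0 := mulr_ge0 e0 (expR_ge0 (17/15 : R)).
case: (leP 1 (15/32 * A)) => hA.
  suff : expR (A + e * (1 - 15/32 * A)) <= expR A by lra.
  by rewrite ler_expR; nra.
set z := e * (1 - 15/32 * A).
have hz : expR z - 1 <= 3/2 * z by apply: expR_sub1_le; rewrite /z; nra.
have hA17 : expR A * (1 - 15/32 * A) <= expR (17/15).
  apply: (@le_trans _ _ (expR A * expR (- (15/32 * A)))).
    by apply: ler_wpM2l; [exact: expR_ge0 | have := expR_ge1Dx (- (15/32 * A)); lra].
  by rewrite -expRD ler_expR; lra.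
have h1 : expR A * expR z <= expR A * (1 + 3/2 * z) by apply: ler_wpM2l; [exact: expR_ge0 | lra].
have h2 : e * (expR A * (1 - 15/32 * A)) <= e * expR (17/15) by exact: ler_wpM2l.
have e1 : expR A * (1 + 3/2 * z) = expR A + 3/2 * (e * (expR A * (1 - 15/32 * A))).
  by rewrite /z; ring.
by rewrite expRD; lra.
Qed.

Lemma Phi_midpoint_le0 r c : r <= 0 -> 0 <= c ->
  (Phi (r + 1) (c + 1) + Phi (r - 1) (c + 1)) / 2 <= Phi r c + expR (17/15) / (2 * (c + 1)).
Proof.
move=> r0 c0; rewrite (Phi_le0 _ r0) (Phi_le0 _ (_ : r - 1 <= 0)); last lra.
have e3 : (3 * (c + 1))^-1 <= 1/3 by rewrite div1r lef_pV2 ?posrE; lra.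
have e0 : 0 <= (3 * (c + 1))^-1 by rewrite invr_ge0; lra.
have hP : Phi (r + 1) (c + 1) <= expR ((3 * (c + 1))^-1).
  rewrite -[X in expR X]mul1r -[X in expR (X * _)](expr1n _ 2) -Phi_ge0 //.
  by apply: Phi_homo; lra.
have hE := expR_sub1_le (_ : 0 <= (3 * (c + 1))^-1 <= 1/3).
have hK : 3/2 * (3 * (c + 1))^-1 <= expR (17/15) / (2 * (c + 1)).
  have -> : 3/2 * (3 * (c + 1))^-1 = (2 * (c + 1))^-1 by field; lra.
  rewrite -[X in X <= _]mul1r; apply: ler_wpM2r; first by rewrite invr_ge0; lra.
  by rewrite -[X in X <= _]expR0 ler_expR; lra.
have := hE ltac:(lra); lra.
Qed.

Lemma Phi_midpoint_gt0 r c : 0 < r <= c ->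
  (Phi (r + 1) (c + 1) + Phi (r - 1) (c + 1)) / 2 <= Phi r c + expR (17/15) / (2 * (c + 1)).
Proof.
case/andP=> r0 rc; have c0 : 0 < c by lra.
set A := r ^+ 2 / (3 * c); set e := (3 * (c + 1))^-1; set q := 2 * e * r.
have A0 : 0 <= A by rewrite /A divr_ge0 ?sqr_ge0 //; lra.
have e0 : 0 < e by rewrite /e invr_gt0; lra.
have e3 : e <= 1/3 by rewrite /e div1r lef_pV2 ?posrE; lra.
have q2 : 0 <= q <= 2/3.
  have -> : q = 2/3 * (r / (c + 1)) by rewrite /q /e; field; lra.
  have : r / (c + 1) <= 1 by rewrite ler_pdivrMr; lra.
  by rewrite mulr_ge0 ?divr_ge0 //=; lra.
have qA : q ^+ 2 <= 4 * e * A.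
  rewrite -subr_ge0.
  have -> : 4 * e * A - q ^+ 2 = 4 * r ^+ 2 / (9 * c * (c + 1) ^+ 2).
    by rewrite /q /e /A; field; apply/andP; split; lra.
  by rewrite divr_ge0 ?mulr_ge0 ?sqr_ge0 //; lra.
(* [(r +- 1)^2 / (3 (c + 1)) = m +- q]; the curvature term [81/128 q^2 <= 81/32 e A]
   eats part of the [- 3 e A] in [m], leaving the [- 15/32 e A] of [expR_drift_le] *)
set m := A + e * (1 - 3 * A).
have hplus : (r + 1) ^+ 2 / (3 * (c + 1)) = m + q.
  by rewrite /m /q /e /A; field; apply/andP; split; lra.
have hminus : (r - 1) ^+ 2 / (3 * (c + 1)) = m - q.
  by rewrite /m /q /e /A; field; apply/andP; split; lra.
have hm : Phi (r - 1) (c + 1) <= expR (m - q) by rewrite -hminus Phi_le_expR //; lra.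
have hmid := expR_midpoint_le m q2.
have hexp : expR (m + 81/128 * q ^+ 2) <= expR (A + e * (1 - 15/32 * A)).
  by rewrite ler_expR /m; lra.
have hd := expR_drift_le A0 (_ : 0 <= e <= 1/3).
have -> : expR (17/15) / (2 * (c + 1)) = 3/2 * e * expR (17/15) by rewrite /e; field; lra.
rewrite Phi_ge0 ?hplus; last lra.
rewrite (Phi_ge0 _ (ltW r0)) -/A.
have := hd ltac:(lra); lra.
Qed.

Lemma Phi_midpoint_le r c : 0 <= c -> `|r| <= c ->
  (Phi (r + 1) (c + 1) + Phi (r - 1) (c + 1)) / 2 <= Phi r c + expR (17/15) / (2 * (c + 1)).
Proof.
move=> c0 rc; case: (leP r 0) => r0; first exact: Phi_midpoint_le0.
by apply: Phi_midpoint_gt0; rewrite r0 (le_trans (ler_norm r)).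
Qed.

Lemma max0_convex (a x y : R) : 0 <= a <= 1 ->
  Num.max ((1 - a) * x + a * y) 0 <= (1 - a) * Num.max x 0 + a * Num.max y 0.
Proof.
case/andP=> a0 a1; have a1' : 0 <= 1 - a by lra.
have hx : x <= Num.max x 0 by rewrite le_max lexx.
have hy : y <= Num.max y 0 by rewrite le_max lexx.
have hx0 : 0 <= Num.max x 0 by rewrite le_max lexx orbT.
have hy0 : 0 <= Num.max y 0 by rewrite le_max lexx orbT.
rewrite ge_max; apply/andP; split; last by rewrite addr_ge0 ?mulr_ge0.
by rewrite lerD // ler_wpM2l.
Qed.

Lemma sqr_div_convex (a x y P Q : R) : 0 <= a <= 1 -> 0 < P -> 0 < Q ->
  ((1 - a) * x + a * y) ^+ 2 / ((1 - a) * P + a * Q) <= (1 - a) * (x ^+ 2 / P) + a * (y ^+ 2 / Q).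
Proof.
case/andP=> a0 a1 P0 Q0; have D0 : 0 < (1 - a) * P + a * Q by nra.
rewrite ler_pdivrMr // -subr_ge0.
have -> : ((1 - a) * (x ^+ 2 / P) + a * (y ^+ 2 / Q)) * ((1 - a) * P + a * Q) -
    ((1 - a) * x + a * y) ^+ 2 = (1 - a) * a * P * Q * (x / P - y / Q) ^+ 2.
  by field; apply/andP; split; lra.
by rewrite mulr_ge0 ?sqr_ge0 // !mulr_ge0 //; lra.
Qed.

Lemma Phi_convex r c a s : 0 <= c -> `|r| <= c -> 0 < a <= 1 ->
  Phi (r + s * a) (c + a) <= (1 - a) * Phi r c + a * Phi (r + s) (c + 1).
Proof.
move=> c0 rc /andP[a0 a1].
set X := Num.max r 0; set Y := Num.max (r + s) 0.
have X0 : 0 <= X by rewrite le_max lexx orbT.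
have Y0 : 0 <= Y by rewrite le_max lexx orbT.
have hM : Num.max (r + s * a) 0 <= (1 - a) * X + a * Y.
  by have := @max0_convex a r (r + s) ltac:(lra); rewrite (_ : _ + _ * _ = r + s * a) //; ring.
have hM0 : 0 <= Num.max (r + s * a) 0 by rewrite le_max lexx orbT.
have hsq : Num.max (r + s * a) 0 ^+ 2 / (3 * (c + a)) <=
    ((1 - a) * X + a * Y) ^+ 2 / (3 * (c + a)).
  by apply: ler_wpM2r; [rewrite invr_ge0; lra | rewrite ler_pXn2r ?nnegrE //; nra].
have hexp : ((1 - a) * X + a * Y) ^+ 2 / (3 * (c + a)) <=
    (1 - a) * (X ^+ 2 / (3 * c)) + a * (Y ^+ 2 / (3 * (c + 1))).
  have [c00 | cpos] := eqVneq c 0.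
    (* [|r| <= 0] forces [X = 0], so the degenerate [Phi r 0 = 1] is harmless *)
    have -> : X = 0 by rewrite /X max_r //; move: rc; rewrite c00 => /ler_normlW.
    rewrite c00 expr0n mul0r mulr0 add0r.
    by rewrite le_eqVlt; apply/orP; left; apply/eqP; field; lra.
  have -> : 3 * (c + a) = (1 - a) * (3 * c) + a * (3 * (c + 1)) by ring.
  have cpos' : 0 < c by rewrite lt_neqAle eq_sym cpos.
  by apply: sqr_div_convex; lra.
rewrite /Phi -/X -/Y.
have := @expR_convex _ (1 - a) (X ^+ 2 / (3 * c)) (Y ^+ 2 / (3 * (c + 1))) ltac:(lra).
rewrite (_ : 1 - (1 - a) = a); last ring.
by apply: le_trans; rewrite ler_expR (le_trans hsq).
Qed.

Lemma Phi_step_le r c x : 0 <= c -> `|r| <= c -> `|x| <= 1 ->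
  Phi (r + x) (c + `|x|) <= Phi r c + wgt r c * x + expR (17/15) * `|x| / (2 * (c + 1)).
Proof.
move=> c0 rc x1; have [-> | x0] := eqVneq x 0.
  by rewrite normr0 !(addr0, mulr0, mul0r).
set M := (Phi (r + 1) (c + 1) + Phi (r - 1) (c + 1)) / 2.
have [s hx hs] : exists2 s, x = s * `|x| & Phi (r + s) (c + 1) = M + s * wgt r c.
  case: ltrgt0P x0 => // hx _.
  - by exists 1; rewrite ?mul1r // /M /wgt; field.
  - by exists (-1); rewrite ?mulN1r ?opprK // /M /wgt; field.
have ha : 0 < `|x| <= 1 by rewrite normr_gt0 x0.
have h1 := Phi_convex s c0 rc ha; rewrite -hx hs in h1.
have h2 := ler_wpM2l (normr_ge0 x) (Phi_midpoint_le c0 rc); rewrite -/M in h2.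
rewrite [X in wgt r c * X]hx; lra.
Qed.

Lemma ln_increment_ge c a : 0 <= c -> 0 <= a <= 1 ->
  a / (2 * (c + 1)) <= ln (1 + (c + a)) - ln (1 + c).
Proof.
move=> c0 /andP[a0 a1].
have ca : 0 < 1 + (c + a) by lra.
have a1ca : a / (1 + (c + a)) < 1 by rewrite ltr_pdivrMr //; lra.
have := @le_ln1Dx _ (- (a / (1 + (c + a)))) ltac:(lra).
rewrite (_ : 1 + _ = (1 + c) / (1 + (c + a))); last by field; lra.
rewrite ln_div ?posrE //; last lra.
have : a / (2 * (c + 1)) <= a / (1 + (c + a)).
  by apply: ler_wpM2l => //; rewrite lef_pV2 ?posrE; lra.
lra.
Qed.

Definition pot r c : R := Phi r c - 1 - expR (17/15) * ln (1 + c).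

Lemma pot_step_le r c x : 0 <= c -> `|r| <= c -> `|x| <= 1 ->
  pot (r + x) (c + `|x|) <= pot r c + wgt r c * x.
Proof.
move=> c0 rc x1; have h1 := Phi_step_le c0 rc x1.
have h2 := ln_increment_ge c0 (_ : 0 <= `|x| <= 1).
have h3 := ler_wpM2l (expR_ge0 (17/15 : R)) (h2 ltac:(by rewrite normr_ge0)).
by rewrite /pot; lra.
Qed.

End AdaNormalHedgePotential.

Section FinalEstimate.
Variable R : realType.

Lemma le_sqrt_of_Phi_le (r c n b : R) : 0 <= c <= n -> `|r| <= c ->
  Phi r c <= expR b -> r <= Num.sqrt (3 * n * b).
Proof.
move=> /andP[c0 cn] rc hP.
have b0 : 0 <= b by rewrite -ler_expR expR0 (le_trans (Phi_ge1 r c0)).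
case: (leP r 0) => [r0 | r0]; first exact: le_trans r0 (sqrtr_ge0 _).
have cpos : 0 < c by apply: lt_le_trans rc; rewrite normr_gt0 gt_eqF.
move: hP; rewrite Phi_ge0; last exact: ltW.
rewrite ler_expR ler_pdivrMr; last lra.
move=> hr; rewrite -(ger0_norm (ltW r0)) -sqrtr_sqr ler_sqrt; last by rewrite !mulr_ge0 //; lra.
nra.
Qed.

Lemma expR_17_15_le : expR (17/15) <= 3/2 * expR 1 :> R.
Proof.
have -> : 17/15 = 1 + 2/15 :> R by field.
have h : expR (2/15) <= 15/13 :> R.
  by rewrite (_ : 15/13 = (1 - 2/15)^-1); [apply: expR_le_inv1B; lra | field].
by rewrite expRD mulrC ler_wpM2r ?expR_ge0 //; lra.
Qed.

Lemma budget_le_expR (t T : nat) (N : R) : (1 <= t <= T)%N -> 1 <= N <= 1 + ln T%:R / ln 2 ->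
  1 + expR (17/15) * (t%:R * ln (1 + t%:R)) * N <=
  expR (1 + ln t%:R + ln (1 + ln T%:R / ln 2) + ln ((5 + 3 * ln (1 + t%:R)) / 2)).
Proof.
move=> /andP[t1 tT] /andP[N1 NX].
set L := ln (1 + t%:R); set X := 1 + ln T%:R / ln 2.
have t1R : 1 <= t%:R :> R by rewrite ler1n.
have L0 : 0 <= L by rewrite /L ln_ge0 //; lra.
have tL : 0 <= t%:R * L by rewrite mulr_ge0 //; lra.
have e1 : 1 <= expR 1 :> R by rewrite -[X in X <= _]expR0 ler_expR.
have t0 : 0 < t%:R :> R by lra.
have X0 : 0 < X by apply: lt_le_trans NX; lra.
have P0 : 0 < (5 + 3 * L) / 2 by lra.
rewrite !expRD !lnK ?posrE //.
have hK := expR_17_15_le.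
have hKL : expR (17/15) * (t%:R * L) * N <= 3/2 * expR 1 * (t%:R * L) * N.
  by apply: ler_wpM2r; [lra | apply: ler_wpM2r].
have hNt : 1 <= N * t%:R by rewrite -[X in X <= _]mulr1 ler_pM.
have hX : N * t%:R <= X * t%:R by apply: ler_wpM2r; [lra | exact: NX].
have hL : 1 + 3/2 * expR 1 * L <= expR 1 * ((5 + 3 * L) / 2).
  by have := ler_wpM2r L0 e1; lra.
have h1 := ler_wpM2r (_ : 0 <= 1 + 3/2 * expR 1 * L) hX.
have h2 := ler_wpM2l (_ : 0 <= X * t%:R) hL.
have := h1 ltac:(have := mulr_ge0 (expR_ge0 1) L0; lra).
have := h2 ltac:(exact: mulr_ge0 (ltW X0) (ltW t0)).
lra.
Qed.

End FinalEstimate.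

Lemma sumr_nat_single (V : nmodType) m n j (F : nat -> V) : (m <= j < n)%N ->
  (forall i, (m <= i < n)%N -> i != j -> F i = 0) -> \sum_(m <= i < n) F i = F j.
Proof.
move=> hj hF; rewrite (bigD1_seq j) ?mem_index_iota ?iota_uniq //=.
by rewrite big1_seq ?addr0 // => i /andP[ij]; rewrite mem_index_iota => /hF ->.
Qed.

Lemma ler_sum_nat_term (R : numDomainType) m n j (P : pred nat) (F : nat -> R) :
  (m <= j < n)%N -> P j -> (forall i, P i -> 0 <= F i) ->
  F j <= \sum_(m <= i < n | P i) F i.
Proof.
move=> hj Pj F0; rewrite big_mkcond (bigD1_seq j) ?mem_index_iota ?iota_uniq //=.
by rewrite Pj lerDl sumr_ge0 // => i _; case: ifP => // /F0.
Qed.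

Lemma sum_clip_recr (V : nmodType) (F : nat -> V) m s h :
  \sum_(m <= u < s.+1 | (u <= h)%N) F u =
  \sum_(m <= u < s | (u <= h)%N) F u + (if (m <= s <= h)%N then F s else 0).
Proof.
case: (leqP m s) => ms /=; first by rewrite big_mkcond [in RHS]big_mkcond big_nat_recr.
by rewrite addr0 !big_geq // ltnW.
Qed.

Lemma idx_inI k t : (0 < t)%N -> inI k (idx k t) t.
Proof.
move=> t0; rewrite /inI /lo /hi /idx.
set n := (2 ^ k)%N; have n0 : (0 < n)%N by rewrite expn_gt0.
have := divn_eq (t - 1) n; have := ltn_pmod (t - 1) n0.
move: ((t - 1) %/ n)%N ((t - 1) %% n)%N => q r hr he.
rewrite subn1 /= mulSn; nia.
Qed.

Lemma inI_idx k i t : (0 < i)%N -> inI k i t -> i = idx k t.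
Proof.
move=> i0; rewrite /inI /lo /hi /idx => /andP[h1 h2].
set n := (2 ^ k)%N in h1 h2 *; have n0 : (0 < n)%N by rewrite expn_gt0.
have := divn_eq (t - 1) n; have := ltn_pmod (t - 1) n0.
move: ((t - 1) %/ n)%N ((t - 1) %% n)%N => q r hr he.
have a1 : ((i - 1) * n < q.+1 * n)%N by rewrite mulSn; lia.
have a2 : (q * n < i * n)%N by lia.
rewrite ltn_pmul2r // in a1; rewrite ltn_pmul2r // in a2.
lia.
Qed.

Lemma idx_le k t : (0 < t)%N -> (idx k t <= t)%N.
Proof. by move=> t0; rewrite /idx; have := leq_div (t - 1) (2 ^ k); move: (_ %/ _)%N; lia. Qed.

Lemma leq_lo k i : (0 < i)%N -> (i <= lo k i)%N.
Proof. by move=> i0; have := expn_gt0 2 k; rewrite /lo; nia. Qed.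

Lemma sum_levels1 (R : numDomainType) (T : nat) : (0 < T)%N ->
  \sum_(0 <= k < T.+1 | (2 ^ k <= T)%N) (1 : R) = (trunc_log 2 T).+1%:R.
Proof.
move=> T0; set K := trunc_log 2 T.
have KT : (K < T.+1)%N.
  by rewrite ltnS; apply: leq_trans (trunc_logP (ltnSn 1) T0); exact: ltnW (ltn_expl _ (ltnSn 1)).
rewrite -[K.+1 in RHS]subn0 -sumr_const_nat (big_nat_widen _ _ _ _ _ KT).
apply: eq_bigl => k; rewrite /= ltnS.
apply/idP/idP => [hk | kK]; first exact: trunc_log_max.
by rewrite (leq_trans (leq_pexp2l _ _) (trunc_logP (ltnSn 1) T0)).
Qed.

Lemma trunc_log2_le_ln (R : realType) T : (0 < T)%N ->
  (trunc_log 2 T)%:R <= ln T%:R / ln 2 :> R.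
Proof.
move=> T0; have l2 : 0 < ln 2 :> R by rewrite ln_gt0 // ltr1n.
rewrite ler_pdivlMr // mulr_natl -lnXn ?ler_ln ?posrE ?exprn_gt0 ?ltr0n //.
by rewrite -natrX ler_nat trunc_logP.
Qed.

Section Jensen.
Variables (R : realFieldType) (V : lmodType R) (Omega : V -> Prop) (g : V -> R).
Hypothesis Omega_convex : forall x y (l : R), Omega x -> Omega y -> 0 <= l <= 1 ->
  Omega (l *: x + (1 - l) *: y).
Hypothesis g_convex : forall x y (l : R), Omega x -> Omega y -> 0 <= l <= 1 ->
  g (l *: x + (1 - l) *: y) <= l * g x + (1 - l) * g y.

Lemma jensen (I : eqType) (s : seq I) (P : pred I) (lam : I -> R) (x : I -> V) :
  (forall j, P j -> 0 <= lam j /\ Omega (x j)) -> 0 < \sum_(j <- s | P j) lam j ->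
  Omega (\sum_(j <- s | P j) (lam j / \sum_(i <- s | P i) lam i) *: x j) /\
  g (\sum_(j <- s | P j) (lam j / \sum_(i <- s | P i) lam i) *: x j) <=
    \sum_(j <- s | P j) (lam j / \sum_(i <- s | P i) lam i) * g (x j).
Proof.
move=> hP; elim: s => [|j s IH]; first by rewrite big_nil ltxx.
rewrite !big_cons; case: ifP => Pj; last exact: IH.
set S' := \sum_(i <- s | P i) lam i => hS.
have S'0 : 0 <= S' by apply: sumr_ge0 => i /hP[].
have [lj0 xj] := hP j Pj.
have [S'e | S'n] := eqVneq S' 0.
  have lam0 i : i \in s -> P i -> lam i = 0.
    move: S'e => /eqP; rewrite psumr_eq0 => [/allP/(_ i) h si Pi|i0 /hP[] //].
    by move: (h si); rewrite Pi => /eqP.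
  have lj : 0 < lam j by rewrite S'e addr0 in hS.
  rewrite S'e addr0 divff ?gt_eqF // scale1r mul1r.
  have z1 : \sum_(i <- s | P i) (lam i / lam j) *: x i = 0.
    by rewrite big_seq_cond big1 // => i /andP[si Pi]; rewrite lam0 // mul0r scale0r.
  have z2 : \sum_(i <- s | P i) (lam i / lam j) * g (x i) = 0.
    by rewrite big_seq_cond big1 // => i /andP[si Pi]; rewrite lam0 // !mul0r.
  by rewrite z1 z2 !addr0.
have S'pos : 0 < S' by rewrite lt_neqAle eq_sym S'n.
have [IH1 IH2] := IH S'pos.
set l := lam j / (lam j + S').
have l01 : 0 <= l <= 1 by rewrite divr_ge0 ?ler_pdivrMr ?mul1r //=; lra.
have e1 : \sum_(i <- s | P i) (lam i / (lam j + S')) *: x i =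
    (1 - l) *: \sum_(i <- s | P i) (lam i / S') *: x i.
  rewrite scaler_sumr; apply: eq_bigr => i _; rewrite scalerA; congr (_ *: _).
  by rewrite /l; field; apply/andP; split; lra.
have e2 : \sum_(i <- s | P i) (lam i / (lam j + S')) * g (x i) =
    (1 - l) * \sum_(i <- s | P i) (lam i / S') * g (x i).
  rewrite mulr_sumr; apply: eq_bigr => i _; rewrite mulrA; congr (_ * _).
  by rewrite /l; field; apply/andP; split; lra.
rewrite -/l e1 e2; split; first exact: Omega_convex.
apply: le_trans (g_convex xj IH1 l01) _.
by rewrite lerD2l; apply: ler_wpM2l => //; lra.
Qed.

End Jensen.

Section AODRun.
Variables (R : realType) (d T : nat) (D G : R) (Omega : 'rV[R]_d -> Prop)
  (f : nat -> 'rV[R]_d -> R) (grad : nat -> 'rV[R]_d -> 'rV[R]_d)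
  (proj : 'rV[R]_d -> 'rV[R]_d) (wI : nat -> nat -> nat -> 'rV[R]_d) (w : nat -> 'rV[R]_d).
Hypothesis oco : OCO_A3 T Omega f grad proj.
Hypothesis run : AOD_run T D G Omega f grad proj wI w.

Lemma Omega_convex x y (l : R) : Omega x -> Omega y -> 0 <= l <= 1 ->
  Omega (l *: x + (1 - l) *: y).
Proof. by case: oco => H _; apply: H. Qed.

Lemma proj_in x : Omega (proj x).
Proof. by case: oco => _ []. Qed.

Lemma f_convex t : (1 <= t <= T)%N -> forall x y (l : R), Omega x -> Omega y -> 0 <= l <= 1 ->
  f t (l *: x + (1 - l) *: y) <= l * f t x + (1 - l) * f t y.
Proof. by case: oco => _ [_ [_ H]] /H[]. Qed.

Lemma f_range t x : (1 <= t <= T)%N -> Omega x -> 0 <= f t x <= 1.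
Proof. by case: oco => _ [_ [_ H]] /H[_ [_]]; apply. Qed.

Lemma wI_in k i u : inD T k i -> inI k i u -> (u <= T)%N -> Omega (wI k i u).
Proof.
case: run => init [restart [ogd _]] hD hI uT; case/andP: (hD) => hk i0.
case/andP: (hI) => lu uh; case: (ltngtP (lo k i) u) => [lt | gt | ue].
- have hI' : inI k i u.-1 by rewrite /inI; lia.
  have := ogd k i u.-1 hD hI'; rewrite prednK; last lia.
  by move=> -> //; exact: proj_in.
- by move: lu; rewrite leqNgt gt.
- have [i1 | i1] : (1 < i)%N \/ i = 1%N by lia.
    by rewrite -ue restart ?ue //; exact: proj_in.
  have <- : 1%N = u by rewrite -ue i1 /lo subnn mul0n.
  by rewrite i1; exact: init.
Qed.

Lemma uw_ge0 k t : 0 <= uw f w wI k t.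
Proof. by apply: wgt_ge0; apply: sumr_ge0 => u _; exact: normr_ge0. Qed.

Lemma wsum_gt0 t : (1 <= t <= T)%N -> 0 < wsum f w wI T t.
Proof.
case/andP=> t1 tT; rewrite /wsum big_ltn_cond // expn0 (leq_trans t1 tT).
apply: ltr_pwDl; last by apply: sumr_ge0 => k _; exact: uw_ge0.
(* the level-0 expert is created fresh at every round *)
have e : idx 0 t = t by rewrite /idx expn0 divn1 subn1 prednK.
by rewrite /uw /Rg /Cg e /lo expn0 muln1 subn1 prednK // !big_geq // wgt00_gt0.
Qed.

Lemma meta_jensen t : (1 <= t <= T)%N ->
  Omega (w t) /\
  f t (w t) <= \sum_(0 <= k < T.+1 | (2 ^ k <= T)%N)
                 (uw f w wI k t / wsum f w wI T t) * f t (wI k (idx k t) t).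
Proof.
move=> ht; case: run => _ [_ [_ /(_ t ht) ->]].
apply: (jensen Omega_convex (f_convex ht)); last exact: wsum_gt0.
move=> k hk; split; first exact: uw_ge0.
case/andP: ht => t1 tT; apply: wI_in => //; last exact: idx_inI.
by rewrite /inD hk.
Qed.

Lemma w_in t : (1 <= t <= T)%N -> Omega (w t).
Proof. by case/meta_jensen. Qed.

Lemma weighted_regret_le0 t : (1 <= t <= T)%N ->
  \sum_(0 <= k < T.+1 | (2 ^ k <= T)%N)
    uw f w wI k t * (f t (w t) - f t (wI k (idx k t) t)) <= 0.
Proof.
move=> ht; have [_ hJ] := meta_jensen ht; have W0 := wsum_gt0 ht.
set W := wsum f w wI T t in hJ W0.
have -> : \sum_(0 <= k < T.+1 | (2 ^ k <= T)%N)
    uw f w wI k t * (f t (w t) - f t (wI k (idx k t) t)) =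
  W * (f t (w t) - \sum_(0 <= k < T.+1 | (2 ^ k <= T)%N)
                     (uw f w wI k t / W) * f t (wI k (idx k t) t)).
  rewrite mulrBr mulr_sumr {1}/W mulr_suml -sumrB.
  by apply: eq_bigr => k _; field; rewrite gt_eqF.
by apply: mulr_ge0_le0; rewrite ?subr_le0 // ltW.
Qed.

Definition rinst k i u := f u (w u) - f u (wI k i u).

(* [Rg]/[Cg] of an expert, frozen once round [s] leaves its interval *)
Definition Rclip k i s := \sum_(lo k i <= u < s | (u <= hi k i)%N) rinst k i u.
Definition Cclip k i s := \sum_(lo k i <= u < s | (u <= hi k i)%N) `|rinst k i u|.

Lemma rinst_le1 k i u : inD T k i -> inI k i u -> (u <= T)%N -> `|rinst k i u| <= 1.
Proof.
move=> hD hI uT; have hu : (1 <= u <= T)%N by case/andP: hI => /(leq_trans _) -> //.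
have := f_range hu (w_in hu); have := f_range hu (wI_in hD hI uT).
by rewrite /rinst ler_norml; lra.
Qed.

Lemma Cclip_ge0 k i s : 0 <= Cclip k i s.
Proof. by apply: sumr_ge0 => u _; exact: normr_ge0. Qed.

Lemma Rclip_le_Cclip k i s : `|Rclip k i s| <= Cclip k i s.
Proof. exact: ler_norm_sum. Qed.

Lemma Cclip_le k i t : inD T k i -> (t <= T)%N -> Cclip k i t.+1 <= (t.+1 - lo k i)%:R.
Proof.
move=> hD tT; rewrite /Cclip -sumr_const_nat big_mkcond /=; apply: ler_sum_nat => u /andP[lu ut].
case: ifP => // uh; apply: rinst_le1; rewrite /inI ?lu ?uh //.
by apply: leq_trans tT; rewrite -ltnS.
Qed.

Lemma Rclip_S k i s : Rclip k i s.+1 = Rclip k i s + (if inI k i s then rinst k i s else 0).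
Proof. exact: sum_clip_recr. Qed.

Lemma Cclip_S k i s : Cclip k i s.+1 = Cclip k i s + (if inI k i s then `|rinst k i s| else 0).
Proof. exact: sum_clip_recr. Qed.

Lemma Rclip_Rg k i s : (s <= (hi k i).+1)%N -> Rclip k i s = Rg f w wI k i s.
Proof.
move=> sh; rewrite /Rclip /Rg big_nat_cond [RHS]big_nat_cond; apply: eq_bigl => u.
by case/boolP: (lo k i <= u < s)%N => //= /andP[_ us]; rewrite -ltnS (leq_trans us sh).
Qed.

Lemma Cclip_Cg k i s : (s <= (hi k i).+1)%N -> Cclip k i s = Cg f w wI k i s.
Proof.
move=> sh; rewrite /Cclip /Cg big_nat_cond [RHS]big_nat_cond; apply: eq_bigl => u.
by case/boolP: (lo k i <= u < s)%N => //= /andP[_ us]; rewrite -ltnS (leq_trans us sh).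
Qed.

Definition Psi s := \sum_(0 <= k < T.+1 | (2 ^ k <= T)%N)
  \sum_(1 <= i < T.+1) pot (Rclip k i s) (Cclip k i s).

Lemma pot_clip_idle k i s : ~~ inI k i s ->
  pot (Rclip k i s.+1) (Cclip k i s.+1) = pot (Rclip k i s) (Cclip k i s).
Proof. by move=> hI; rewrite Rclip_S Cclip_S (negbTE hI) !addr0. Qed.

Lemma pot_clip_step k s : (2 ^ k <= T)%N -> (1 <= s <= T)%N ->
  pot (Rclip k (idx k s) s.+1) (Cclip k (idx k s) s.+1) <=
  pot (Rclip k (idx k s) s) (Cclip k (idx k s) s) + uw f w wI k s * rinst k (idx k s) s.
Proof.
move=> hk /andP[s1 sT]; have hI := idx_inI k s1.
have hD : inD T k (idx k s) by rewrite /inD hk.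
have sh : (s <= (hi k (idx k s)).+1)%N by case/andP: hI => _ /leqW.
rewrite Rclip_S Cclip_S hI /uw -Rclip_Rg // -Cclip_Cg //.
by apply: pot_step_le; [exact: Cclip_ge0 | exact: Rclip_le_Cclip | exact: rinst_le1].
Qed.

Lemma Psi_step s : (1 <= s <= T)%N -> Psi s.+1 <= Psi s.
Proof.
move=> hs; have [s1 sT] := andP hs.
rewrite -subr_le0 /Psi -sumrB; apply: le_trans (weighted_regret_le0 hs).
apply: ler_sum => k hk; rewrite -sumrB (@sumr_nat_single _ _ _ (idx k s)).
- by have := pot_clip_step hk hs; rewrite /rinst; lra.
- by rewrite ltnS (leq_trans (idx_le k s1)).
move=> i /andP[i1 _] ne; rewrite pot_clip_idle ?subrr //.
by apply: contra ne => hI; rewrite (inI_idx i1 hI).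
Qed.

Lemma Psi1 : Psi 1 = 0.
Proof.
rewrite /Psi big1 // => k _; rewrite big1 // => i _.
by rewrite /pot /Rclip /Cclip !big_geq // Phi_le0 // addr0 ln1 mulr0 !subrr.
Qed.

Lemma Psi_le0 s : (s <= T)%N -> Psi s.+1 <= 0.
Proof.
elim: s => [|s IH] hs; first by rewrite Psi1.
by apply: le_trans (Psi_step _) (IH (ltnW hs)); rewrite hs.
Qed.

Lemma sum_ln_Cclip_le k t : (2 ^ k <= T)%N -> (t <= T)%N ->
  \sum_(1 <= i < T.+1) ln (1 + Cclip k i t.+1) <= t%:R * ln (1 + t%:R).
Proof.
move=> hk tT; rewrite (@big_cat_nat _ _ _ t.+1) ?ltnS //=.
have -> : \sum_(t.+1 <= i < T.+1) ln (1 + Cclip k i t.+1) = 0.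
  rewrite big_nat_cond big1 // => i /andP[/andP[ti _] _].
  have i0 : (0 < i)%N by apply: leq_trans ti.
  by rewrite /Cclip big_geq ?addr0 ?ln1 // (leq_trans ti (leq_lo k i0)).
rewrite addr0.
rewrite (_ : t%:R * _ = \sum_(1 <= i < t.+1) ln (1 + t%:R)); last first.
  by rewrite sumr_const_nat subn1 mulr_natl.
apply: ler_sum_nat.
move=> i /andP[i1 it]; have hD : inD T k i by rewrite /inD hk.
have C0 := Cclip_ge0 k i t.+1; have := Cclip_le hD tT.
rewrite ler_ln ?posrE; [|lra|]; last by rewrite ltr_pwDl ?ltr0n.
have : ((t.+1 - lo k i)%N%:R : R) <= t%:R by rewrite ler_nat; have := leq_lo k i1; lia.
lra.
Qed.

Lemma Phi_clip_le k i t : inD T k i -> inI k i t -> (t <= T)%N ->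
  Phi (Rclip k i t.+1) (Cclip k i t.+1) <=
  1 + expR (17/15) * (t%:R * ln (1 + t%:R)) * \sum_(0 <= k < T.+1 | (2 ^ k <= T)%N) 1.
Proof.
move=> hD hI tT; case/andP: (hD) => hk i0; case/andP: (hI) => lt _.
have P0 k' i' : 0 <= Phi (Rclip k' i' t.+1) (Cclip k' i' t.+1) - 1.
  by rewrite subr_ge0 Phi_ge1 ?Cclip_ge0.
have hP : Phi (Rclip k i t.+1) (Cclip k i t.+1) - 1 <=
    \sum_(0 <= k < T.+1 | (2 ^ k <= T)%N) \sum_(1 <= i < T.+1)
      (Phi (Rclip k i t.+1) (Cclip k i t.+1) - 1).
  apply: (@le_trans _ _ (\sum_(1 <= i' < T.+1)
                             (Phi (Rclip k i' t.+1) (Cclip k i' t.+1) - 1))).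
    apply: ler_sum_nat_term => //; rewrite i0 ltnS.
    exact: leq_trans (leq_lo k i0) (leq_trans lt tT).
  apply: (ler_sum_nat_term (P := fun k => (2 ^ k <= T)%N)) => // [|k' _]; last exact: sumr_ge0.
  by rewrite ltnS (leq_trans _ hk) // ltnW // ltn_expl.
have hL : \sum_(0 <= k < T.+1 | (2 ^ k <= T)%N) \sum_(1 <= i < T.+1) ln (1 + Cclip k i t.+1) <=
    t%:R * ln (1 + t%:R) * \sum_(0 <= k < T.+1 | (2 ^ k <= T)%N) 1.
  by rewrite mulr_sumr; apply: ler_sum => k' hk'; rewrite mulr1 sum_ln_Cclip_le.
have := ler_wpM2l (expR_ge0 (17/15 : R)) hL.
have := Psi_le0 tT; rewrite /Psi /pot.
under eq_bigr do rewrite sumrB -mulr_sumr.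
rewrite sumrB -mulr_sumr.
lra.
Qed.

Lemma regret_clip_le k i t : inD T k i -> inI k i t -> (t <= T)%N ->
  Rclip k i t.+1 <= Num.sqrt (3 * (t - lo k i + 1)%N%:R *
    (1 + ln t%:R + ln (1 + ln T%:R / ln 2) + ln ((5 + 3 * ln (1 + t%:R)) / 2))).
Proof.
move=> hD hI tT; case/andP: (hI) => lt _.
have t1 : (1 <= t)%N by apply: leq_trans lt.
have T0 : (0 < T)%N by apply: leq_trans tT.
apply: le_sqrt_of_Phi_le; last 1 first.
- apply: le_trans (Phi_clip_le hD hI tT) (budget_le_expR _ _); first by rewrite t1.
  rewrite sum_levels1 // ler1n /= -addn1 natrD addrC lerD2l.
  exact: trunc_log2_le_ln.
- by rewrite addn1 -subSn // Cclip_ge0 Cclip_le.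
- exact: Rclip_le_Cclip.
Qed.

End AODRun.

Theorem lemma1 (R : realType) (d T : nat) (D G : R)
  (Omega : 'rV[R]_d -> Prop) (f : nat -> 'rV[R]_d -> R)
  (grad : nat -> 'rV[R]_d -> 'rV[R]_d) (proj : 'rV[R]_d -> 'rV[R]_d)
  (wI : nat -> nat -> nat -> 'rV[R]_d) (w : nat -> 'rV[R]_d) :
  0 < D -> 0 < G ->
  OCO_A3 T Omega f grad proj ->
  AOD_run T D G Omega f grad proj wI w ->
  forall (k i t : nat), inD T k i -> inI k i t -> (t <= T)%N ->
  let c := 1 + ln (t%:R) + ln (1 + ln (T%:R) / ln 2)
             + ln ((5 + 3 * ln (1 + t%:R)) / 2) in
  \sum_(lo k i <= u < t.+1) f u (w u) - \sum_(lo k i <= u < t.+1) f u (wI k i u)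
    <= Num.sqrt (3 * (t - lo k i + 1)%N%:R * c).
Proof.
move=> _ _ oco run k i t hD hI tT.
have := regret_clip_le oco run hD hI tT.
by rewrite Rclip_Rg /Rg ?sumrB // ltnS; case/andP: hI.
Qed.
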